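(* Assume the setting and hypotheses (a)–(c) below. Suppose $\mathbf{P}_0(\bar x_0)$ is feasible, and define recursively, for all $k\ge0$, $\bar{\mathbf u}^*_k=(\bar u^*_{0|k},\dots,\bar u^*_{N-1|k})$ an optimal solution of $\mathbf{P}_k(\bar x_k)$ and $\bar x_{k+1}=A\bar x_k+B\bar u^*_{0|k}$. Let $\ell_k:=\bar x_k^TQ\bar x_k+(\bar u^*_{0|k})^TR\,\bar u^*_{0|k}+\mathrm{trace}[(Q+K^TRK)\Sigma_k]$ (which equals $\mathbb{E}[x_k^TQx_k+u_k^TRu_k]$ when $x_k=\bar x_k+\Delta x_k$ with $\mathbb{E}[\Delta x_k]=0$, $\mathbb{E}[\Delta x_k\Delta x_k^T]=\Sigma_k$ and $u_k=K\Delta x_k+\bar u^*_{0|k}$). Then $$\limsup_{M\to\infty}\frac{1}{M}\sum_{k=0}^{M-1}\ell_k\le\mathrm{trace}(SW).$$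
   Context: System data: $A\in\mathbb{R}^{n_x\times n_x}$, $B\in\mathbb{R}^{n_x\times n_u}$, feedback gain $K\in\mathbb{R}^{n_u\times n_x}$, $A_K:=A+BK$, noise covariance $W\succeq0$, $Q,R$ positive definite, horizon $N\ge 1$, $S$ the solution of $A_K^TSA_K-S=-Q-K^TRK$. $\bar\Sigma\succeq0$ solves $\bar\Sigma=A_K\bar\Sigma A_K^T+W$. Covariance sequence: $\Sigma_0\succeq 0$ with $\Sigma_0\preceq\bar\Sigma$ (e.g. $\Sigma_0=0$), $\Sigma_{j+1}=A_K\Sigma_jA_K^T+W$. Fix $a\in\mathbb{R}^{n_x}$, $c\in\mathbb{R}^{n_u}$, $b,d>0$, $p_x,p_u\in(0,1)$. For $\Sigma\succeq 0$, $\mathcal{X}(\Sigma)=\{\bar x:\ \exists\, y\ge 0,\ \lambda\in[0,b],\ y^2+a^T\Sigma a\le p_x(b-\lambda)^2,\ |a^T\bar x|\le y+\lambda\}$ and $\mathcal{U}(\Sigma)=\{\bar u:\ \exists\, y\ge 0,\ \lambda\in[0,d],\ y^2+c^TK\Sigma K^Tc\le p_u(d-\lambda)^2,\ |c^T\bar u|\le y+\lambda\}$; terminal set $\bar{\mathcal{X}}_f:=\mathcal{X}(\bar\Sigma)$. Problem $\mathbf{P}_k(\bar x)$: minimize over $\bar{\mathbf u}=(\bar u_0,\dots,\bar u_{N-1})$ the cost $J_k(\bar x,\bar{\mathbf u})=\sum_{l=0}^{N-1}(\bar x_l^TQ\bar x_l+\bar u_l^TR\bar u_l)+\bar x_N^TS\bar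 x_N+\sum_{l=0}^{N-1}\mathrm{trace}[(Q+K^TRK)\Sigma_{k+l}]+\mathrm{trace}(S\Sigma_{k+N})$ subject to $\bar x_0=\bar x$, $\bar x_{l+1}=A\bar x_l+B\bar u_l$, $\bar x_l\in\mathcal{X}(\Sigma_{k+l})$ and $\bar u_l\in\mathcal{U}(\Sigma_{k+l})$ for $l=0,\dots,N-1$, and $\bar x_N\in\bar{\mathcal{X}}_f$. Hypotheses: (a) $Kx\in\mathcal{U}(\Sigma_{k+N})$ for all $x\in\bar{\mathcal{X}}_f$ and all $k\ge0$; (b) all eigenvalues of $A_K$ have modulus $<1$; (c) $A_Kx\in\bar{\mathcal{X}}_f$ for all $x\in\bar{\mathcal{X}}_f$. *)

From HB Require Import structures.
From mathcomp Require Import all_boot all_order all_algebra.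
From mathcomp Require Import all_classical all_reals all_analysis.
From mathcomp Require Import complex.
Set Implicit Arguments. Unset Strict Implicit. Unset Printing Implicit Defensive.
Import Order.TTheory GRing.Theory Num.Theory.
Local Open Scope ring_scope.

Section Defs.
Variable R : realType.

Definition qf (n : nat) (x : 'cV[R]_n) (M : 'M[R]_n) : R := (x^T *m M *m x) 0 0.

Definition psd (n : nat) (M : 'M[R]_n) : Prop :=
  M^T = M /\ forall x : 'cV[R]_n, 0 <= qf x M.
Definition posdef (n : nat) (M : 'M[R]_n) : Prop :=
  M^T = M /\ forall x : 'cV[R]_n, x != 0 -> 0 < qf x M.
Definition loewner_le (n : nat) (M1 M2 : 'M[R]_n) : Prop := psd (M2 - M1).

Definition schur_stable (n : nat) (M : 'M[R]_n) : Prop :=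
  forall l : R[i], eigenvalue (map_mx (fun r : R => (r%:C)%C) M) l -> `|l| < 1.

Fixpoint Sig (n : nat) (AK W S0 : 'M[R]_n) (j : nat) : 'M[R]_n :=
  match j with
  | O => S0
  | j'.+1 => AK *m Sig AK W S0 j' *m AK^T + W
  end.

Definition inX (n : nat) (a : 'cV[R]_n) (b px : R) (Sg : 'M[R]_n) (x : 'cV[R]_n) : Prop :=
  exists y lam : R, 0 <= y /\ 0 <= lam <= b /\
    y ^+ 2 + qf a Sg <= px * (b - lam) ^+ 2 /\ `|(a^T *m x) 0 0| <= y + lam.

Definition inU (n m : nat) (K : 'M[R]_(m, n)) (c : 'cV[R]_m) (d pu : R)
  (Sg : 'M[R]_n) (u : 'cV[R]_m) : Prop :=
  exists y lam : R, 0 <= y /\ 0 <= lam <= d /\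
    y ^+ 2 + qf c (K *m Sg *m K^T) <= pu * (d - lam) ^+ 2 /\
    `|(c^T *m u) 0 0| <= y + lam.

(* predicted nominal trajectory; only u 0, ..., u (N-1) are ever used *)
Fixpoint traj (n m : nat) (A : 'M[R]_n) (B : 'M[R]_(n, m)) (x : 'cV[R]_n)
  (u : nat -> 'cV[R]_m) (l : nat) : 'cV[R]_n :=
  match l with
  | O => x
  | l'.+1 => A *m traj A B x u l' + B *m u l'
  end.

Section Problem.
Variables (n m N : nat) (A : 'M[R]_n) (B : 'M[R]_(n, m)) (K : 'M[R]_(m, n))
  (Q S W S0 Sbar : 'M[R]_n) (Rc : 'M[R]_m)
  (a : 'cV[R]_n) (c : 'cV[R]_m) (b d px pu : R).

Let AK := A + B *m K.
Let Sg := Sig AK W S0.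

Definition Jcost (k : nat) (x : 'cV[R]_n) (u : nat -> 'cV[R]_m) : R :=
  \sum_(l < N) (qf (traj A B x u l) Q + qf (u l) Rc)
  + qf (traj A B x u N) S
  + \sum_(l < N) \tr ((Q + K^T *m Rc *m K) *m Sg (k + l))
  + \tr (S *m Sg (k + N)).

Definition feasible (k : nat) (x : 'cV[R]_n) (u : nat -> 'cV[R]_m) : Prop :=
  (forall l, (l < N)%N ->
     inX a b px (Sg (k + l)) (traj A B x u l) /\ inU K c d pu (Sg (k + l)) (u l))
  /\ inX a b px Sbar (traj A B x u N).

Definition optimal (k : nat) (x : 'cV[R]_n) (u : nat -> 'cV[R]_m) : Prop :=
  feasible k x u /\ forall v, feasible k x v -> Jcost k x u <= Jcost k x v.

End Problem.
End Defs.

From HB Require Import structures.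
From mathcomp Require Import all_boot all_order all_algebra.
From mathcomp Require Import all_classical all_reals all_analysis.
From mathcomp Require Import complex ring lra.
Import Order.TTheory GRing.Theory Num.Theory numFieldNormedType.Exports.
Set Implicit Arguments. Unset Strict Implicit. Unset Printing Implicit Defensive.
Local Open Scope classical_set_scope.
Local Open Scope ring_scope.

(* Recursive feasibility plus a Lyapunov-type decrease of the optimal cost V_k.
   If u is optimal for P_k(x_k), the shifted sequence (u_1, ..., u_{N-1}, K x_N) is
   feasible for P_{k+1}(x_{k+1}) by (a), (c) and Sigma_j <= Sigma_bar, and the Lyapunov
   equation for S makes its cost exactly V_k - l_k + tr(SW).  Optimality then gives
   V_{k+1} <= V_k - l_k + tr(SW), so sum_{k<M} l_k <= V_0 - V_M + M tr(SW).  The costs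
   V_k are bounded below: S is positive semidefinite because A_K is Schur stable, and
   the covariances Sigma_j are squeezed between 0 and Sigma_bar, which bounds the trace
   terms.  Schur stability is used only through A_K^j -> 0, which follows from
   Cayley-Hamilton once the characteristic polynomial is split over C. *)

Section Vanishing.
Variable R : realType.
Local Notation normc := (@Normc.normc R).

Lemma normc_ge0 (z : R[i]) : 0 <= normc z.
Proof. by case: z => x y; rewrite /Normc.normc sqrtr_ge0. Qed.

Lemma contraction_le (r h : R) (u : nat -> R) : 0 <= r < 1 -> 0 <= h ->
  (forall j, u j.+1 <= h + r * u j) -> forall j, u j <= r ^+ j * u 0%N + h / (1 - r).
Proof.
move=> /andP[r0 r1] h0 hu; elim=> [|j IH].
  by rewrite expr0 mul1r lerDl divr_ge0 // subr_ge0 ltW.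
apply: (le_trans (hu j)); have := ler_wpM2l r0 IH.
have r1' : 1 - r != 0 by rewrite subr_eq0 eq_sym lt_eqF.
have -> : r ^+ j.+1 * u 0%N + h / (1 - r) = h + r * (r ^+ j * u 0%N + h / (1 - r)).
  by rewrite exprS; field.
by rewrite lerD2l.
Qed.

Definition vanishing (s : nat -> R[i]) :=
  forall e : R, 0 < e -> exists J, forall j, (J <= j)%N -> normc (s j) < e.

Lemma vanishing_rec (z : R[i]) (s : nat -> R[i]) : normc z < 1 ->
  vanishing (fun j => s j.+1 - z * s j) -> vanishing s.
Proof.
move=> z1 ht e e0; set r := normc z.
have r01 : 0 <= r < 1 by rewrite normc_ge0.
pose h := e * (1 - r) / 2.
have h0 : 0 < h by rewrite divr_gt0 // mulr_gt0 // subr_gt0.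
have [J HJ] := ht h h0.
pose u j := normc (s (J + j)%N).
have hu j : u j.+1 <= h + r * u j.
  rewrite /u addnS -[s _.+1](subrK (z * s (J + j)%N)).
  apply: (le_trans (le_normcD _ _)); rewrite Normc.normcM lerD2r ltW //.
  by apply: HJ; rewrite leq_addr.
have hub := contraction_le r01 (ltW h0) hu.
have : r ^+ j * u 0%N @[j --> \oo] --> 0.
  rewrite -(mul0r (u 0%N)); apply: cvgMr_tmp; apply: cvg_expr.
  by case/andP: r01 => r0 r1; rewrite ger0_norm.
have e2 : 0 < e / 2 by rewrite divr_gt0.
move=> /cvgr0Pnorm_lt /(_ _ e2) [J' _ HJ'].
exists (J + J')%N => j hj; rewrite -(subnKC (leq_trans (leq_addr J' J) hj)).
apply: (le_lt_trans (hub _)).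
have : r ^+ (j - J) * u 0%N < e / 2.
  apply: le_lt_trans (ler_norm _) (HJ' _ _).
  by rewrite /= leq_subRL // (leq_trans (leq_addr J' J) hj).
have r1' : 1 - r != 0 by rewrite subr_eq0 eq_sym lt_eqF //; case/andP: r01.
have -> : h / (1 - r) = e / 2 by rewrite /h; field.
lra.
Qed.

Section DifferenceOperators.
Variable p : nat.

Definition diffop (z : R[i]) (s : nat -> 'M[R[i]]_p) j := s j.+1 - z *: s j.

Lemma diffops_vanishing (rs : seq R[i]) (s : nat -> 'M[R[i]]_p) :
  (forall z, z \in rs -> normc z < 1) ->
  (forall i k, vanishing (fun j => foldr diffop s rs j i k)) ->
  forall i k, vanishing (fun j => s j i k).
Proof.
elim: rs => [|z rs IH] hrs hF //=.
apply: IH => [w hw|i k]; first by apply: hrs; rewrite in_cons hw orbT.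
apply: (@vanishing_rec z); first by apply: hrs; rewrite in_cons eqxx.
move=> e /(hF i k e) [J HJ]; exists J => j /HJ.
by rewrite /diffop !mxE.
Qed.

End DifferenceOperators.

Lemma diffops_expr p (G : 'M[R[i]]_p.+1) (rs : seq R[i]) j :
  foldr (@diffop p.+1) (fun j => G ^+ j) rs j = G ^+ j * \prod_(z <- rs) (G - z%:M).
Proof.
elim: rs j => [|z rs IH] j /=; first by rewrite big_nil mulr1.
rewrite /diffop !IH big_cons exprSr -mulrA scalerAr -mulrBr; congr (_ * _).
by rewrite mulrBl -mul_scalar_mx mulmxE.
Qed.

Lemma schur_stable_expr_cvg0 n (G : 'M[R]_n) : schur_stable G ->
  forall i k, (G ^+ j) i k @[j --> \oo] --> 0.
Proof.
case: n G => [G _ [] //|p G hs i k].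
set Gc := map_mx (fun r : R => (r%:C)%C) G.
have [rs Hrs] := closed_field_poly_normal (char_poly Gc).
rewrite (monicP (char_poly_monic Gc)) scale1r in Hrs.
have hrs z : z \in rs -> normc z < 1.
  move=> hz; rewrite -(ltcR (R:=R)); apply: hs.
  by rewrite eigenvalue_root_char Hrs root_prod_XsubC.
have hprod : \prod_(z <- rs) (Gc - z%:M) = 0.
  have := Cayley_Hamilton Gc; rewrite Hrs rmorph_prod /=.
  by under eq_bigr => z _ do rewrite rmorphB /= horner_mx_X horner_mx_C.
have hF i' k' : vanishing (fun j => foldr (@diffop p.+1) (fun j => Gc ^+ j) rs j i' k').
  move=> e e0; exists 0%N => j _.
  by rewrite diffops_expr hprod mulr0 mxE Normc.normc0.
apply/cvgr0Pnorm_lt => e /(diffops_vanishing hrs hF i k) [J HJ].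
exists J => // j /HJ; rewrite /Gc -rmorphXn mxE.
by rewrite /Normc.normc /= expr0n /= addr0 sqrtr_sqr.
Qed.

End Vanishing.

Section QuadraticForms.
Variable R : realType.

Lemma qfD n (x : 'cV[R]_n) (M1 M2 : 'M[R]_n) : qf x (M1 + M2) = qf x M1 + qf x M2.
Proof. by rewrite /qf mulmxDr mulmxDl mxE. Qed.

Lemma qfN n (x : 'cV[R]_n) (M : 'M[R]_n) : qf x (- M) = - qf x M.
Proof. by rewrite /qf mulmxN mulNmx mxE. Qed.

Lemma qfB n (x : 'cV[R]_n) (M1 M2 : 'M[R]_n) : qf x (M1 - M2) = qf x M1 - qf x M2.
Proof. by rewrite qfD qfN. Qed.

Lemma qf_mulmx n p (G : 'M[R]_(n, p)) (x : 'cV[R]_p) (M : 'M[R]_n) :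
  qf (G *m x) M = qf x (G^T *m M *m G).
Proof. by rewrite /qf trmx_mul !mulmxA. Qed.

Lemma posdef_qf_ge0 n (M : 'M[R]_n) x : posdef M -> 0 <= qf x M.
Proof.
case=> _ hM; have [->|/hM/ltW //] := eqVneq x 0.
by rewrite /qf mulmx0 mxE.
Qed.

Lemma qf_delta n (M : 'M[R]_n) i k (s : R) :
  qf (delta_mx i 0 + s *: delta_mx k 0 : 'cV_n) M
  = M i i + s * (M i k + M k i) + s ^+ 2 * M k k.
Proof.
rewrite /qf [(_ + _)^T]raddfD /= linearZ /= !mulmxDl !mulmxDr -!scalemxAl -!scalemxAr.
rewrite !trmx_delta -!rowE -!colE !mxE /=; ring.
Qed.

Lemma cvg_sum0 (I : finType) (f : I -> nat -> R) :
  (forall i, f i j @[j --> \oo] --> 0) -> \sum_i f i j @[j --> \oo] --> 0.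
Proof.
move=> hf; have := @cvg_big _ _ +%R 0 xpredT add_continuous _ \oo (index_enum I) f
  (fun=> 0) _ (fun i _ => hf i).
by rewrite big1 //; apply; exact: _.
Qed.

Lemma mulmx_cvg0 n p q (G : nat -> 'M[R]_(n, p)) (X : 'M[R]_(p, q)) :
  (forall i k, G j i k @[j --> \oo] --> 0) -> forall i l, (G j *m X) i l @[j --> \oo] --> 0.
Proof.
move=> hG i l; under eq_fun do rewrite mxE.
apply: cvg_sum0 => k; rewrite -(mul0r (X k l)); exact: cvgMr_tmp.
Qed.

Lemma qf_cvg0 n (y : nat -> 'cV[R]_n) (M : 'M[R]_n) :
  (forall i, y j i 0 @[j --> \oo] --> 0) -> qf (y j) M @[j --> \oo] --> 0.
Proof.
move=> hy; rewrite /qf; under eq_fun do rewrite mxE.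
apply: cvg_sum0 => b; rewrite -(mul0r 0); apply: cvgM; last exact: hy.
apply: (@mulmx_cvg0 1 n n (fun j => (y j)^T)) => i k.
by under eq_fun do rewrite mxE; rewrite (ord1 i); exact: hy.
Qed.

Lemma lyapunov_psd n (G S QK : 'M[R]_n) : schur_stable G ->
  G^T *m S *m G - S = - QK -> (forall x, 0 <= qf x QK) -> forall x, 0 <= qf x S.
Proof.
move=> hs hL hQ x; pose y j := G ^+ j *m x.
have hGSG : G^T *m S *m G = S - QK by rewrite -hL addrC subrK.
have hdecr : nonincreasing_seq (fun j => qf (y j) S).
  apply/nonincreasing_seqP => j; rewrite /y exprS -mulmxE -mulmxA qf_mulmx.
  by rewrite hGSG qfB gerBl.
have hlim : qf (y j) S @[j --> \oo] --> 0.
  by apply: qf_cvg0 => i; apply: mulmx_cvg0; exact: schur_stable_expr_cvg0.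
have := nonincreasing_cvgn_ge hdecr (cvgP 0 hlim) 0%N.
by rewrite (cvg_lim _ hlim) // /y expr0 mul1mx.
Qed.

End QuadraticForms.

Section Semidefinite.
Variable R : realType.

Lemma psdD n (P1 P2 : 'M[R]_n) : psd P1 -> psd P2 -> psd (P1 + P2).
Proof. by move=> [t1 h1] [t2 h2]; split=> [|x]; rewrite ?raddfD /= ?t1 ?t2 // qfD addr_ge0. Qed.

Lemma psd_congr n p (G : 'M[R]_(p, n)) (P : 'M[R]_n) : psd P -> psd (G *m P *m G^T).
Proof.
move=> [t h]; split=> [|x]; first by rewrite !trmx_mul trmxK t mulmxA.
by have := h (G^T *m x); rewrite qf_mulmx trmxK.
Qed.

Lemma psd_Sig n (G W S0 : 'M[R]_n) : psd W -> psd S0 -> forall j, psd (Sig G W S0 j).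
Proof. by move=> hW hS0; elim=> [|j IH] //=; apply: psdD => //; apply: psd_congr. Qed.

Lemma loewner_le_Sig n (G W S0 Sbar : 'M[R]_n) : Sbar = G *m Sbar *m G^T + W ->
  loewner_le S0 Sbar -> forall j, loewner_le (Sig G W S0 j) Sbar.
Proof.
move=> hSb hle; elim=> [|j IH] //=; rewrite /loewner_le.
have -> : Sbar - (G *m Sig G W S0 j *m G^T + W) = G *m (Sbar - Sig G W S0 j) *m G^T.
  by rewrite mulmxBr mulmxBl [in LHS]hSb opprD addrACA subrr addr0.
exact: psd_congr.
Qed.

Lemma psd_entry_le n (P : 'M[R]_n) i k : psd P -> 2 * `|P i k| <= P i i + P k k.
Proof.
move=> [tP hP]; have sym : P k i = P i k by rewrite -[in LHS]tP mxE.
have := hP (delta_mx i 0 + 1 *: delta_mx k 0); have := hP (delta_mx i 0 + -1 *: delta_mx k 0).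
rewrite !qf_delta sym -[2]ger0_norm // -normrM ler_norml; lra.
Qed.

Lemma loewner_le_diag n (P Sb : 'M[R]_n) i : loewner_le P Sb -> P i i <= Sb i i.
Proof.
move=> [_ /(_ (delta_mx i 0 + 0 *: delta_mx i 0))].
rewrite qf_delta !mxE; lra.
Qed.

Lemma mxtrace_mul_lbounded n (F Sb : 'M[R]_n) :
  exists C, forall P, psd P -> loewner_le P Sb -> - C <= \tr (F *m P).
Proof.
exists (\sum_i \sum_k `|F i k| * (Sb k k + Sb i i)) => P hP hle.
rewrite /mxtrace -sumrN; apply: ler_sum => i _; rewrite mxE -sumrN.
apply: ler_sum => k _.
have hPki : `|P k i| <= Sb k k + Sb i i.
  have := psd_entry_le k i hP; have := loewner_le_diag i hle.
  have := loewner_le_diag k hle; have := normr_ge0 (P k i); lra.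
have : `|F i k * P k i| <= `|F i k| * (Sb k k + Sb i i) by rewrite normrM ler_wpM2l.
by rewrite ler_norml => /andP[].
Qed.

End Semidefinite.

Section RecedingHorizon.
Variable R : realType.
Variables (n m N' : nat) (A : 'M[R]_n) (B : 'M[R]_(n, m)) (K : 'M[R]_(m, n))
  (Q S W S0 Sbar : 'M[R]_n) (Rc : 'M[R]_m)
  (a : 'cV[R]_n) (c : 'cV[R]_m) (b d px pu : R).
Local Notation N := N'.+1.
Local Notation G := (A + B *m K).
Local Notation Sg := (Sig (A + B *m K) W S0).
Local Notation QK := (Q + K^T *m Rc *m K).

Lemma inX_loewner_antimono (S1 S2 : 'M[R]_n) x :
  loewner_le S2 S1 -> inX a b px S1 x -> inX a b px S2 x.
Proof.
move=> [_ /(_ a)]; rewrite qfB subr_ge0 => hle [y [lam [hy [hlam [h1 h2]]]]].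
by exists y, lam; do !split => //; lra.
Qed.

Definition shift_ctrl (x : 'cV[R]_n) (u : nat -> 'cV[R]_m) l :=
  if (l < N')%N then u l.+1 else K *m traj A B x u N.

Lemma traj_shift x u l : (l <= N')%N ->
  traj A B (A *m x + B *m u 0%N) (shift_ctrl x u) l = traj A B x u l.+1.
Proof. by elim: l => [|l IH] hl //=; rewrite IH ?(ltnW hl) // /shift_ctrl hl. Qed.

Lemma traj_shift_last x u :
  traj A B (A *m x + B *m u 0%N) (shift_ctrl x u) N = G *m traj A B x u N.
Proof. by rewrite [LHS]/= traj_shift // /shift_ctrl ltnn mulmxDl mulmxA. Qed.

Hypothesis Sg_le_Sbar : forall j, loewner_le (Sg j) Sbar.
Hypothesis inU_terminal : forall x k, inX a b px Sbar x -> inU K c d pu (Sg (k + N)) (K *m x).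
Hypothesis inX_terminal : forall x, inX a b px Sbar x -> inX a b px Sbar (G *m x).

Lemma feasible_shift k x u : feasible N A B K W S0 Sbar a c b d px pu k x u ->
  feasible N A B K W S0 Sbar a c b d px pu k.+1 (A *m x + B *m u 0%N) (shift_ctrl x u).
Proof.
move=> [hl hN]; split; last by rewrite traj_shift_last; apply: inX_terminal.
move=> l hlN; rewrite traj_shift // addSnnS /shift_ctrl.
case: ltnP => hlt; first exact: hl.
have -> : l = N' by apply/eqP; rewrite eqn_leq hlt -ltnS hlN.
by split; [apply: inX_loewner_antimono hN | apply: inU_terminal].
Qed.

Lemma Jcost_lbounded : posdef Q -> posdef Rc -> (forall x, 0 <= qf x S) ->
  psd W -> psd S0 -> exists C, forall k x u, - C <= Jcost N A B K Q S W S0 Rc k x u.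
Proof.
move=> hQ hRc hS hW hS0; have hSg := psd_Sig G hW hS0.
have [CQ hCQ] := mxtrace_mul_lbounded QK Sbar.
have [CS hCS] := mxtrace_mul_lbounded S Sbar.
exists (N%:R * CQ + CS) => k x u; rewrite /Jcost.
have stage : 0 <= \sum_(l < N) (qf (traj A B x u l) Q + qf (u l) Rc).
  by apply: sumr_ge0 => l _; rewrite addr_ge0 // posdef_qf_ge0.
have covs : - (N%:R * CQ) <= \sum_(l < N) \tr (QK *m Sg (k + l)).
  have -> : N%:R * CQ = \sum_(l < N) CQ by rewrite sumr_const card_ord mulr_natl.
  by rewrite -sumrN; apply: ler_sum => l _; apply: hCQ.
have := hS (traj A B x u N); have := hCS _ (hSg (k + N)) (Sg_le_Sbar _); lra.
Qed.

Hypothesis lyapunov : G^T *m S *m G - S = - Q - K^T *m Rc *m K.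

Lemma Jcost_shift k x u :
  Jcost N A B K Q S W S0 Rc k.+1 (A *m x + B *m u 0%N) (shift_ctrl x u) =
  Jcost N A B K Q S W S0 Rc k x u
  - (qf x Q + qf (u 0%N) Rc + \tr (QK *m Sg k)) + \tr (S *m W).
Proof.
rewrite /Jcost; set x' := A *m x + B *m u 0%N; set xN := traj A B x u N.
set X1 := \sum_(l < N') (qf (traj A B x u l.+1) Q + qf (u l.+1) Rc).
set T1 := \sum_(l < N') \tr (QK *m Sg (k + l.+1)).
have hGSG : G^T *m S *m G = S - QK.
  by rewrite -(subrK S (G^T *m S *m G)) lyapunov opprD addrC.
have stage_shift :
    \sum_(l < N) (qf (traj A B x' (shift_ctrl x u) l) Q + qf (shift_ctrl x u l) Rc)
    = X1 + (qf xN Q + qf (K *m xN) Rc).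
  rewrite big_ord_recr /=; congr (_ + _); last by rewrite traj_shift // /shift_ctrl ltnn.
  by apply: eq_bigr => l _; rewrite traj_shift 1?ltnW // /shift_ctrl ltn_ord.
have terminal_shift :
    qf (traj A B x' (shift_ctrl x u) N) S = qf xN S - qf xN Q - qf (K *m xN) Rc.
  by rewrite traj_shift_last qf_mulmx hGSG qfB qfD qf_mulmx opprD addrA.
have cov_shift : \tr (S *m Sg (k.+1 + N)) =
    \tr (S *m Sg (k + N)) - \tr (QK *m Sg (k + N)) + \tr (S *m W).
  rewrite addSn /= mulmxDr mxtraceD !mulmxA mxtrace_mulC !mulmxA hGSG.
  by rewrite mulmxBl mxtraceD raddfN.
have covs_shift : \sum_(l < N) \tr (QK *m Sg (k.+1 + l)) = T1 + \tr (QK *m Sg (k + N)).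
  by rewrite big_ord_recr addSnnS; congr (_ + _); apply: eq_bigr => l _; rewrite addSnnS.
rewrite stage_shift terminal_shift cov_shift covs_shift.
by rewrite big_ord_recl -/X1 (big_ord_recl N') addn0 -/T1; lra.
Qed.

End RecedingHorizon.

Section CesaroBound.
Variable R : realType.

Lemma limn_esup_le_eventually (u : nat -> R) (c : R) :
  (forall e : R, 0 < e -> exists J, forall j, (J <= j)%N -> u j <= c + e) ->
  (limn_esup (fun j => (u j)%:E) <= c%:E)%E.
Proof.
move=> hu; apply/lee_addgt0Pr => e /hu [J HJ].
rewrite /limn_esup limf_esupE; apply: ge_ereal_inf; eexists.
  by exists [set j : nat | (J <= j)%N]; [exists J | reflexivity].
by apply: ge_ereal_sup => _ [j hj <-]; rewrite -EFinD lee_fin; apply: HJ.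
Qed.

Lemma limn_esup_avg_le (ell V : nat -> R) (c C : R) :
  (forall k, - C <= V k) -> (forall k, V k.+1 <= V k - ell k + c) ->
  (limn_esup (fun M => ((M%:R)^-1 * \sum_(k < M) ell k)%:E) <= c%:E)%E.
Proof.
move=> hV hrec; apply: limn_esup_le_eventually => e e0.
have hsum M : \sum_(k < M) ell k <= V 0%N - V M + M%:R * c.
  elim: M => [|M IH]; first by rewrite big_ord0 subrr mul0r addr0.
  by rewrite big_ord_recr /= -natr1 mulrDl mul1r; have := hrec M; lra.
have D0 : 0 <= V 0%N + C by have := hV 0%N; lra.
set J := Num.Def.archi_bound ((V 0%N + C) / e).
exists J.+1 => j hj; have j0 : 0 < j%:R :> R by rewrite ltr0n (leq_trans _ hj).
have hDe : V 0%N + C < j%:R * e.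
  rewrite -ltr_pdivrMr //; apply: (lt_le_trans (archi_boundP _)).
    exact: divr_ge0 (ltW e0).
  by rewrite ler_nat ltnW.
rewrite ler_pdivrMl // mulrDr; have := hsum j; have := hV j; lra.
Qed.

End CesaroBound.

Theorem mainTheorem4 (R : realType) (n m N : nat)
  (A : 'M[R]_n) (B : 'M[R]_(n, m)) (K : 'M[R]_(m, n))
  (W Q S Sbar S0 : 'M[R]_n) (Rc : 'M[R]_m)
  (a : 'cV[R]_n) (c : 'cV[R]_m) (b d px pu : R)
  (x0 : 'cV[R]_n) (xb : nat -> 'cV[R]_n) (us : nat -> nat -> 'cV[R]_m) :
  (1 <= N)%N ->
  psd W -> posdef Q -> posdef Rc ->
  (A + B *m K)^T *m S *m (A + B *m K) - S = - Q - K^T *m Rc *m K ->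
  psd Sbar -> Sbar = (A + B *m K) *m Sbar *m (A + B *m K)^T + W ->
  psd S0 -> loewner_le S0 Sbar ->
  0 < b -> 0 < d -> 0 < px < 1 -> 0 < pu < 1 ->
  (* hypothesis (a) *)
  (forall x k, inX a b px Sbar x ->
     inU K c d pu (Sig (A + B *m K) W S0 (k + N)) (K *m x)) ->
  (* hypothesis (b) *)
  schur_stable (A + B *m K) ->
  (* hypothesis (c) *)
  (forall x, inX a b px Sbar x -> inX a b px Sbar ((A + B *m K) *m x)) ->
  (* P_0(x0) feasible *)
  (exists u, feasible N A B K W S0 Sbar a c b d px pu 0 x0 u) ->
  (* closed loop with optimal solutions *)
  xb 0%N = x0 ->
  (forall k, optimal N A B K Q S W S0 Sbar Rc a c b d px pu k (xb k) (us k)) ->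
  (forall k, xb k.+1 = A *m xb k + B *m us k 0%N) ->
  (limn_esup (fun M : nat =>
    ((M%:R)^-1 * \sum_(k < M)
       (qf (xb k) Q + qf (us k 0%N) Rc
        + \tr ((Q + K^T *m Rc *m K) *m Sig (A + B *m K) W S0 k)))%:E)
  <= (\tr (S *m W))%:E)%E.
Proof.
case: N => [//|N] _ hW hQ hRc hL _ hSbar hS0 hS0le _ _ _ _ ha hs hc _ _ hopt hxb.
have hle := loewner_le_Sig hSbar hS0le.
have hS : forall x, 0 <= qf x S.
  apply: (lyapunov_psd (QK := Q + K^T *m Rc *m K) hs); first by rewrite hL opprD.
  by move=> x; rewrite qfD -qf_mulmx addr_ge0 // posdef_qf_ge0.
have [C hC] := Jcost_lbounded N hle hQ hRc hS hW hS0.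
apply: (@limn_esup_avg_le _
  (fun k => qf (xb k) Q + qf (us k 0%N) Rc
            + \tr ((Q + K^T *m Rc *m K) *m Sig (A + B *m K) W S0 k))
  (fun k => Jcost N.+1 A B K Q S W S0 Rc k (xb k) (us k)) _ C) => [k|k]; first exact: hC.
have [hfeas _] := hopt k; have [_ hmin] := hopt k.+1.
rewrite hxb in hmin *; have := hmin _ (feasible_shift hle ha hc hfeas).
by rewrite (Jcost_shift N W S0 hL).
Qed.
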